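(* Assume the setup of the context, in particular $N_j=\tilde N-n_j$. Let \[ D_1(N)=s_0^{2N-1}\prod_{p\mid s_0}p^{\nu_p(N-1)}\times\prod_{j=1}^m\Big\{\prod_{p\mid v_j}p^{\nu_p(n_j)}\prod_{p\nmid s_j}p^{M_p(r_j+(n_0+1)s_j)}\Big\}, \] \[ D_2(N)=\Big(\frac{d}{(d,s_0)}\Big)^{\tilde N}\prod_{p\mid s}p^{\nu_p(\tilde N)}\times\prod_p p^{M_p(U+V\tilde N)}, \] (products over primes $p$) and $D(N)=D_1(N)D_2(N)$. Then $D(N)Q_i(z)\in\mathbb{Z}[z]$ and $D(N)P_{ij}(z)\in\mathbb{Z}[z]$ for all $i=0,1,\dots,m$, $j=1,\dots,m$.
   Context: Let $m\ge1$ and let $\alpha_0,\alpha_1,\dots,\alpha_m$ be positive rational numbers with $\alpha_i-\alpha_j\notin\mathbb{Z}$ for $1\le i<j\le m$. Pochhammer symbol: $(x)_0=1$, $(x)_n=x(x+1)\cdots(x+n-1)$. Let $\varphi_j(z)=\sum_{n\ge0}\frac{(\alpha_j)_n}{(\alpha_j+\alpha_0)_n}z^n$. Write $\alpha_j=r_j/s_j$ ($j=0,\dots,m$) and $\alpha_j+\alpha_0=u_j/v_j$ ($j=1,\dots,m$) with positive integers, $\gcd(r_j,s_j)=\gcd(u_j,v_j)=1$; $R=\max_{1\le j\le m} r_j$, $S=\max s_j$, $U=\max u_j$, $V=\max v_j$; $d_j$ is the positive integer with $s_0s_j=d_jv_j$; $s,v,d$ are the least common multiples of $s_j$, $v_j$,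 $d_j$ ($j=1,\dots,m$) respectively; $\tilde d=d/\gcd(d,s_0)$. For $x>0$ and a prime $p$, $M_p(x)=\lfloor \log x/\log p\rfloor$ (so $p^{M_p(x)}=1$ for $p>x$), and $\nu_p(n)=\sum_{t\ge1}\lfloor n/p^t\rfloor$. Padé setup: let $n_1,\dots,n_m$ be positive integers, $N=n_1+\cdots+n_m$, $n_0\ge\max\{n_1,\dots,n_m\}$ an integer, $\tilde N=N+n_0$, and $N_j=\tilde N-n_j$. For $i=0,\dots,m$ and $\delta_{ij}$ the Kronecker delta, $Q_i(z)=\sum_{k=0}^Na_{ik}z^k$ with $a_{iN}=1$ and for $k=0,\dots,N-1$ \[ a_{i,N-k-1}=\sum_{\ell=k}^{N-1}(-1)^{\ell+1}\frac{(\alpha_0-1)_{\ell-k}}{(\ell-k)!}\frac{(\alpha_0+\ell+1)_{N-\ell-1}}{(N-\ell-1)!}\prod_{j=1}^m\frac{(\alpha_j+\alpha_0+n_0-n_j+\delta_{ij}+\ell+1)_{n_j}}{(\alpha_j+n_0-n_j+\delta_{ij}+1)_{n_j}}, \] and $P_{ij}(z)=\sum_{\mu=0}^{N_j+\delta_{ij}}c_{ij\mu}z^\mu$, $c_{ij\mu}=\sum_{k=0}^{\min\{N,\mu\}}a_{ik}\frac{(\alpha_j)_{\mu-k}}{(\alpha_j+\alpha_0)_{\mu-k}}$. *)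

From HB Require Import structures.
From mathcomp Require Import all_boot all_order all_algebra.
Set Implicit Arguments. Unset Strict Implicit. Unset Printing Implicit Defensive.
Import Order.TTheory GRing.Theory Num.Theory.

Local Open Scope ring_scope.

Definition poch (x : rat) (k : nat) : rat := \prod_(i < k) (x + i%:R).

Definition qnum (a : rat) : nat := `|numq a|%N.
Definition qden (a : rat) : nat := `|denq a|%N.

(* nu_p(n) = sum_{t>=1} floor(n/p^t)  (terms with t > n vanish for p >= 2) *)
Definition nu (p n : nat) : nat := (\sum_(1 <= t < n.+1) n %/ p ^ t)%N.

Definition Mp (p x : nat) : nat := trunc_log p x.

Definition Ntot (m : nat) (n : nat -> nat) : nat := (\sum_(1 <= j < m.+1) n j)%N.
Definition Ntil (m : nat) (n : nat -> nat) : nat := (Ntot m n + n 0%N)%N.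

Definition r_ (alpha : nat -> rat) j := qnum (alpha j).
Definition s_ (alpha : nat -> rat) j := qden (alpha j).
Definition u_ (alpha : nat -> rat) j := qnum (alpha j + alpha 0%N).
Definition v_ (alpha : nat -> rat) j := qden (alpha j + alpha 0%N).
(* d_j : the positive integer with s_0 s_j = d_j v_j *)
Definition d_ (alpha : nat -> rat) j := ((s_ alpha 0 * s_ alpha j) %/ v_ alpha j)%N.

Definition Umax m alpha : nat := (\max_(1 <= j < m.+1) u_ alpha j)%N.
Definition Vmax m alpha : nat := (\max_(1 <= j < m.+1) v_ alpha j)%N.
Definition slcm m alpha : nat := (\big[lcmn/1]_(1 <= j < m.+1) s_ alpha j)%N.
Definition dlcm m alpha : nat := (\big[lcmn/1]_(1 <= j < m.+1) d_ alpha j)%N.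
Definition dtil m alpha : nat := (dlcm m alpha %/ gcdn (dlcm m alpha) (s_ alpha 0))%N.

(* products over primes p of p^{M_p(x)}; factors with p > x are 1 *)
Definition D1 (m : nat) (alpha : nat -> rat) (n : nat -> nat) : nat :=
  let N := Ntot m n in
  let s0 := s_ alpha 0 in
  (s0 ^ (2 * N - 1)
   * (\prod_(p < s0.+1 | prime p && (p %| s0)) p ^ nu p (N - 1))
   * \prod_(1 <= j < m.+1)
       ((\prod_(p < (v_ alpha j).+1 | prime p && (p %| v_ alpha j)) p ^ nu p (n j))
        * \prod_(p < (r_ alpha j + (n 0 + 1) * s_ alpha j).+1
                   | prime p && ~~ (p %| s_ alpha j))
            p ^ Mp p (r_ alpha j + (n 0 + 1) * s_ alpha j)))%N.

Definition D2 (m : nat) (alpha : nat -> rat) (n : nat -> nat) : nat :=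
  let Nt := Ntil m n in
  let s := slcm m alpha in
  let X := (Umax m alpha + Vmax m alpha * Nt)%N in
  (dtil m alpha ^ Nt
   * (\prod_(p < s.+1 | prime p && (p %| s)) p ^ nu p Nt)
   * \prod_(p < X.+1 | prime p) p ^ Mp p X)%N.

Definition DN m alpha n : nat := (D1 m alpha n * D2 m alpha n)%N.

Definition coefa (m : nat) (alpha : nat -> rat) (n : nat -> nat) (i k : nat) : rat :=
  let N := Ntot m n in
  if k == N then 1 else
  let kk := (N - k).-1 in
  \sum_(kk <= l < N)
    (-1) ^+ l.+1
    * (poch (alpha 0%N - 1) (l - kk) / (l - kk)`!%:R)
    * (poch (alpha 0%N + l.+1%:R) (N - l - 1) / (N - l - 1)`!%:R)
    * \prod_(1 <= j < m.+1)
        (poch (alpha j + alpha 0%N + (n 0%N)%:R - (n j)%:R + (i == j)%:R + l%:R + 1) (n j)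
         / poch (alpha j + (n 0%N)%:R - (n j)%:R + (i == j)%:R + 1) (n j)).

Definition Qpoly m alpha n (i : nat) : {poly rat} :=
  \poly_(k < (Ntot m n).+1) coefa m alpha n i k.

Definition coefc m alpha n (i j mu : nat) : rat :=
  \sum_(0 <= k < (minn (Ntot m n) mu).+1)
    coefa m alpha n i k * (poch (alpha j) (mu - k) / poch (alpha j + alpha 0%N) (mu - k)).

Definition Ppoly m alpha n (i j : nat) : {poly rat} :=
  \poly_(mu < (Ntil m n - n j + (i == j)).+1) coefc m alpha n i j mu.

From HB Require Import structures.
From mathcomp Require Import all_boot all_order all_algebra.
From mathcomp Require Import zify ring.
Import Order.TTheory GRing.Theory Num.Theory.
Set Implicit Arguments. Unset Strict Implicit. Unset Printing Implicit Defensive.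

(* Every coefficient of [Q_i] and [P_ij] is a sum of products of Pochhammer quotients
   [(x)_t / t!] and [(b/w)_t / (a/s)_t] with rational arguments.  Writing [x = A/s], the
   numerator of [(x)_t] is the product of [t] terms [A, A + s, ...] of an arithmetic
   progression.  For a prime [p] not dividing [s], such a product is divisible by
   [p ^ nu_p(t)], the [p]-part of [t!], because modulo that power it is congruent to [s ^ t]
   times [t] consecutive integers; and when its terms are positive and at most [X] its
   [p]-adic valuation is at most [nu_p(t) + M_p(X)], since at most [t / p^e + 1] of them are
   divisible by [p ^ e].  The primes dividing the denominators [s] are absorbed by the
   factors [s_0 ^ _], [dtil ^ _] and [prod_(p | s) p ^ nu_p(_)] of [D(N)], and comparing
   valuations prime by prime shows that [D_1(N)] clears the denominators of the [a_ik] and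
   [D_2(N)] those of the quotients [(alpha_j)_mu / (alpha_j + alpha_0)_mu]. *)

(** * Legendre's function *)

Lemma nuE p n : prime p -> nu p n = logn p n`!.
Proof. by move=> pp; rewrite /nu logn_fact. Qed.

Lemma nuD_le p a b : prime p -> nu p a + nu p b <= nu p (a + b).
Proof.
move=> pp; rewrite !nuE // -lognM ?fact_gt0 //.
apply: dvdn_leq_log (fact_gt0 _) _.
by rewrite -(bin_fact (leq_addr b a)) addKn dvdn_mull.
Qed.

Lemma leq_nu p a b : prime p -> a <= b -> nu p a <= nu p b.
Proof.
by move=> pp ab; rewrite -(subnKC ab); apply: leq_trans (nuD_le _ _ pp); apply: leq_addr.
Qed.

Lemma nuEsum p t : nu p t = \sum_(e < t) t %/ p ^ e.+1.
Proof. by rewrite /nu big_add1 /= big_mkord. Qed.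

(** * Products of arithmetic progressions *)

Lemma prod_consec_ffact b t : \prod_(i < t) (b.+1 + i) = (b + t) ^_ t.
Proof.
elim: t => [|t IH]; first by rewrite big_ord0 ffactn0.
by rewrite big_ord_recr /= IH addnS ffactSS mulnC addSn.
Qed.

Lemma fact_dvd_prod_consec b t : t`! %| \prod_(i < t) (b + i).
Proof.
case: b => [|b]; last by rewrite prod_consec_ffact -bin_ffact dvdn_mull.
by case: t => [|t]; rewrite ?big_ord0 // big_ord_recl /= mul0n dvdn0.
Qed.

Lemma logn_prod p I (r : seq I) (P : pred I) (F : I -> nat) :
  (forall i, P i -> 0 < F i) ->
  logn p (\prod_(i <- r | P i) F i) = \sum_(i <- r | P i) logn p (F i).
Proof.
move=> F0; suff [] : 0 < \prod_(i <- r | P i) F i /\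
    logn p (\prod_(i <- r | P i) F i) = \sum_(i <- r | P i) logn p (F i) by [].
elim/big_rec2: _ => [|i x y Pi [x0 <-]]; first by rewrite logn1.
by rewrite muln_gt0 F0 // lognM ?F0.
Qed.

Section ArithmeticProgressions.
Local Open Scope ring_scope.

Lemma dvdz_prodB (q : int) I (r : seq I) (P : pred I) (F G : I -> int) :
  (forall i, P i -> (q %| F i - G i)%Z) ->
  (q %| \prod_(i <- r | P i) F i - \prod_(i <- r | P i) G i)%Z.
Proof.
move=> FG; apply: (big_ind2 (fun x y => q %| x - y)%Z) => // x1 x2 y1 y2 dx dy.
rewrite (_ : x1 * y1 - x2 * y2 = (x1 - x2) * y1 + x2 * (y1 - y2)); last by ring.
by apply: rpredD; [exact: dvdz_mulr | exact: dvdz_mull].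
Qed.

Lemma pnu_dvdz_prod_arith p (A : int) (s t : nat) : prime p -> ~~ (p %| s)%N ->
  ((p ^ nu p t)%:Z %| \prod_(i < t) (A + (i * s)%:Z))%Z.
Proof.
move=> pp ps; set q : int := (p ^ nu p t)%:Z.
have q0 : q != 0 by rewrite /q eqz_nat -lt0n expn_gt0 prime_gt0.
have [u [v Buv]] := Bezoutz s%:Z q.
have {}Buv : u * s%:Z + v * q = 1.
  rewrite Buv /gcdz /= (eqP (_ : coprime s (p ^ nu p t))) //.
  by rewrite coprimeXr // coprime_sym prime_coprime.
(* [w] represents [A / s] modulo [q], so that [A + i s = s (w + i)] modulo [q]. *)
set w := ((A * u) %% q)%Z; have w_ge0 : 0 <= w by apply: modz_ge0.
have wE : w = A * u - ((A * u) %/ q)%Z * q by rewrite /w {2}(divz_eq (A * u) q) addrC addKr.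
have congr_i (i : nat) : (q %| (A + (i * s)%:Z) - s%:Z * (`|w| + i)%N%:Z)%Z.
  apply/dvdzP; exists (A * v + s%:Z * ((A * u) %/ q)%Z).
  rewrite PoszD PoszM abszE ger0_norm // wE; apply/eqP; rewrite -subr_eq0.
  rewrite (_ : _ - _ = A * (1 - (u * s%:Z + v * q))); last by ring.
  by rewrite Buv subrr mulr0.
rewrite -[X in (_ %| X)%Z](subrK (\prod_(i < t) (s%:Z * (`|w| + i)%N%:Z))).
rewrite rpredD ?dvdz_prodB // big_split /= dvdz_mull //.
rewrite -(big_morph _ PoszM (erefl 1%Z)) dvdzE /=.
by rewrite (dvdn_trans _ (fact_dvd_prod_consec _ _)) // nuE // pfactor_dvdnn.
Qed.

Lemma pnu_dvdn_prod_arith p b w t : prime p -> ~~ (p %| w)%N ->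
  (p ^ nu p t %| \prod_(i < t) (b + i * w))%N.
Proof.
move=> pp pw; have := pnu_dvdz_prod_arith b%:Z t pp pw.
by rewrite -(big_morph _ PoszM (erefl 1%Z)) dvdzE.
Qed.

End ArithmeticProgressions.

Lemma card_dvd_arith_le (q a s t : nat) : 0 < q -> coprime q s ->
  #|[set i : 'I_t | q %| a + i * s]| <= t %/ q + 1.
Proof.
move=> q0 qs; pose f (i : 'I_t) : 'I_(t %/ q).+1 := inord (i %/ q).
suff f_inj : {in [set i : 'I_t | q %| a + i * s] &, injective f}.
  by rewrite -(card_in_imset f_inj) addn1 (leq_trans (max_card _)) ?card_ord.
have quot_lt (i : 'I_t) : i %/ q < (t %/ q).+1 by rewrite ltnS leq_div2r // ltnW.
move=> i j; rewrite !inE /f => qi qj /(congr1 val); rewrite /= !inordK // => ij.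
apply: val_inj => /=; wlog ji : i j qi qj ij / j <= i.
  by move=> H; case: (leqP j i) => [|/ltnW]; [exact: H | move/H=> ->].
have : q %| (i - j) * s by rewrite mulnBl -(subnDl a) dvdn_sub.
rewrite Gauss_dvdl // => q_ij.
have := divn_eq i q; have := divn_eq j q; have := ltn_pmod i q0; have := ltn_pmod j q0.
have [|/dvdn_leq/(_ q_ij)] := posnP (i - j); rewrite ij; lia.
Qed.

Lemma logn_sum_dvd p x X : prime p -> 0 < x <= X ->
  logn p x = \sum_(e < trunc_log p X) (p ^ e.+1 %| x).
Proof.
move=> pp /andP[x0 xX].
have logn_le : logn p x <= trunc_log p X.
  apply: trunc_log_max (prime_gt1 pp) (leq_trans _ xX).
  exact: dvdn_leq x0 (pfactor_dvdnn p x).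
transitivity (\sum_(e < logn p x) 1).
  by rewrite -(big_mkord xpredT (fun=> 1)) sum_nat_const_nat subn0 muln1.
rewrite (big_ord_widen _ (fun=> 1) logn_le) big_mkcond; apply: eq_bigr => e _.
by rewrite pfactor_dvdn //; case: ltnP.
Qed.

Lemma sum_divn_pexp_le_nu p t M : prime p -> \sum_(e < M) t %/ p ^ e.+1 <= nu p t.
Proof.
move=> pp; rewrite nuEsum -!(big_mkord xpredT (fun e => t %/ p ^ e.+1)).
case: (leqP M t) => [Mt|tM].
  by rewrite (big_cat_nat (leq0n M) Mt) /= leq_addr.
rewrite (big_cat_nat (leq0n t) (ltnW tM)) /= [X in _ + X]big_nat_cond.
rewrite [X in _ + X]big1 ?addn0 //.
move=> e /andP[/andP[te _] _]; rewrite divn_small //.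
exact: leq_ltn_trans te (ltn_trans (ltnSn e) (ltn_expl _ (prime_gt1 pp))).
Qed.

Lemma logn_prod_arith_le p a s t X : prime p -> ~~ (p %| s) ->
  (forall i, i < t -> 0 < a + i * s <= X) ->
  logn p (\prod_(i < t) (a + i * s)) <= nu p t + trunc_log p X.
Proof.
move=> pp ps aX; set M := trunc_log p X.
rewrite logn_prod => [|i _]; last by case/andP: (aX i (ltn_ord i)).
rewrite (eq_bigr (fun i : 'I_t => \sum_(e < M) (p ^ e.+1 %| a + i * s))); last first.
  by move=> i _; apply: logn_sum_dvd => //; apply: aX.
rewrite exchange_big /= (@leq_trans (\sum_(e < M) (t %/ p ^ e.+1 + 1))) //; last first.
  by rewrite big_split /= sum_nat_const card_ord muln1 leq_add2r sum_divn_pexp_le_nu.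
apply: leq_sum => e _.
have pe_s : coprime (p ^ e.+1) s by rewrite coprime_pexpl // prime_coprime.
have pe_gt0 : 0 < p ^ e.+1 by rewrite expn_gt0 prime_gt0.
apply: leq_trans (card_dvd_arith_le a t pe_gt0 pe_s).
rewrite -sum1dep_card [X in _ <= X]big_mkcond; apply/eq_leq/eq_bigr => i _.
by case: (_ %| _).
Qed.

Lemma dvdn_prod_arith (a s b w t X W : nat) :
  0 < a -> 0 < b -> 0 < W -> coprime a s ->
  (forall i, i < t -> a + i * s <= X) ->
  (forall p, prime p -> ~~ (p %| s) -> p %| w -> nu p t + trunc_log p X <= logn p W) ->
  (forall p, prime p -> ~~ (p %| s) -> ~~ (p %| w) -> trunc_log p X <= logn p W) ->
  \prod_(i < t) (a + i * s) %| W * \prod_(i < t) (b + i * w).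
Proof.
move=> a0 b0 W0 a_s aX W_dvd W_ndvd.
have prod_gt0 c d : 0 < c -> 0 < \prod_(i < t) (c + i * d).
  by move=> c0; apply: prodn_cond_gt0 => i _; rewrite addn_gt0 c0.
apply/dvdn_partP => [|p]; first exact: prod_gt0.
rewrite mem_primes => /and3P[pp _ _].
rewrite p_part pfactor_dvdn ?muln_gt0 ?W0 ?prod_gt0 // lognM ?prod_gt0 //.
have [ps|ps] := boolP (p %| s).
  rewrite logn_prod => [|i _]; last by rewrite addn_gt0 a0.
  rewrite big1 // => i _; apply: logn_coprime; rewrite prime_coprime //.
  rewrite dvdn_addl ?dvdn_mull //; apply: contraL ps => pa.
  by rewrite -prime_coprime // (coprime_dvdl pa a_s).
have le_logn : logn p (\prod_(i < t) (a + i * s)) <= nu p t + trunc_log p X.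
  by apply: logn_prod_arith_le => // i it; rewrite addn_gt0 a0 aX.
apply: leq_trans le_logn _; have [pw|pw] := boolP (p %| w).
  exact: leq_trans (W_dvd p pp ps pw) (leq_addr _ _).
rewrite addnC leq_add ?W_ndvd // -pfactor_dvdn ?prod_gt0 //.
exact: pnu_dvdn_prod_arith.
Qed.

Definition nu_prod (s t : nat) : nat := \prod_(p < s.+1 | prime p && (p %| s)) p ^ nu p t.

Lemma prod_pow_gt0 B (P : pred nat) (e : nat -> nat) :
  (forall q, P q -> 0 < q) -> 0 < \prod_(q < B | P q) q ^ e q.
Proof. by move=> P0; apply: prodn_cond_gt0 => q /P0 q0; rewrite expn_gt0 q0. Qed.

Lemma logn_prod_pow_ge p B (P : pred nat) (e : nat -> nat) :
  (forall q, P q -> 0 < q) -> prime p -> p < B -> P p ->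
  e p <= logn p (\prod_(q < B | P q) q ^ e q).
Proof.
move=> P0 pp pB Pp; rewrite -pfactor_dvdn ?prod_pow_gt0 //.
by rewrite (bigD1 (Ordinal pB)) //= dvdn_mulr.
Qed.

Lemma trunc_log_le_logn_prod_Mp p X (P : pred nat) :
  (forall q, P q -> 0 < q) -> prime p -> P p ->
  trunc_log p X <= logn p (\prod_(q < X.+1 | P q) q ^ Mp q X).
Proof.
move=> P0 pp Pp; have [pX|Xp] := leqP p X; first exact: (@logn_prod_pow_ge p X.+1 P (Mp^~ X)).
suff -> : trunc_log p X = 0 by [].
by apply/eqP; rewrite trunc_log_eq0; apply/orP; right; lia.
Qed.

Lemma nu_prod_gt0 s t : 0 < nu_prod s t.
Proof.
by apply: (@prod_pow_gt0 s.+1 (fun q => prime q && (q %| s)) (nu^~ t)) => q /andP[/prime_gt0].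
Qed.

Lemma nu_le_logn_nu_prod p s t : prime p -> 0 < s -> p %| s ->
  nu p t <= logn p (nu_prod s t).
Proof.
move=> pp s0 ps.
apply: (@logn_prod_pow_ge p s.+1 (fun q => prime q && (q %| s)) (nu^~ t)) => //.
- by move=> q /andP[/prime_gt0].
- by rewrite ltnS dvdn_leq.
- by rewrite pp ps.
Qed.

Lemma nu_prodM_dvd s a b c : a + b <= c -> nu_prod s a * nu_prod s b %| nu_prod s c.
Proof.
move=> abc; rewrite /nu_prod -big_split /=.
apply: (big_ind2 (fun x y => x %| y)) => // [x1 x2 y1 y2|q /andP[qp _]]; first exact: dvdn_mul.
by rewrite -expnD dvdn_exp2l // (leq_trans (nuD_le _ _ qp)) ?leq_nu.
Qed.

(** * Denominators of Pochhammer quotients *)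

Section Denominators.
Local Open Scope ring_scope.

Definition clears_den (D : nat) (x : rat) := D%:R * x \is a Num.int.

Lemma clears_den1 x : x \is a Num.int -> clears_den 1 x.
Proof. by rewrite /clears_den mul1r. Qed.

Lemma clears_denM D1 D2 x y :
  clears_den D1 x -> clears_den D2 y -> clears_den (D1 * D2) (x * y).
Proof. by rewrite /clears_den natrM mulrACA; apply: rpredM. Qed.

Lemma clears_den_dvd D1 D2 x : (D1 %| D2)%N -> clears_den D1 x -> clears_den D2 x.
Proof. by move=> /dvdnP[k ->] Dx; rewrite /clears_den natrM -mulrA rpredM ?rpred_nat. Qed.

Lemma clears_den_sum D (I : eqType) (r : seq I) (P : pred I) (F : I -> rat) :
  (forall i, i \in r -> P i -> clears_den D (F i)) -> clears_den D (\sum_(i <- r | P i) F i).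
Proof.
move=> DF; rewrite /clears_den big_seq_cond mulr_sumr rpred_sum // => i /andP[ir Pi].
exact: DF.
Qed.

Lemma clears_den_prod (I : eqType) (r : seq I) (P : pred I) (E : I -> nat) (F : I -> rat) :
  (forall i, i \in r -> P i -> clears_den (E i) (F i)) ->
  clears_den (\prod_(i <- r | P i) E i) (\prod_(i <- r | P i) F i).
Proof.
move=> EF; rewrite big_seq_cond [X in clears_den _ X]big_seq_cond.
elim/big_rec2: _ => [|i D x /andP[ir Pi] Dx]; first exact: clears_den1.
exact: clears_denM (EF i ir Pi) Dx.
Qed.

Lemma clears_den_frac (D : nat) (a b : int) :
  (b %| D%:Z * a)%Z -> clears_den D (a%:~R / b%:~R).
Proof. by move=> b_Da; rewrite /clears_den mulrA -[D%:R]/(D%:Z%:~R) -intrM Qint_dvdz. Qed.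

Lemma clears_den_fracn (D a b : nat) : (b %| D * a)%N -> clears_den D (a%:R / b%:R).
Proof. by move=> b_Da; apply: (clears_den_frac (a := a) (b := b)); rewrite -PoszM dvdzE. Qed.

Lemma poch_frac (A : int) (s t : nat) : (0 < s)%N ->
  poch (A%:~R / s%:R) t = (\prod_(i < t) (A + (i * s)%:Z))%:~R / (s ^ t)%:R.
Proof.
move=> s0; have s_neq0 : s%:R != 0 :> rat by rewrite pnatr_eq0 -lt0n.
have -> : (s ^ t)%:R = \prod_(i < t) (s%:R : rat) by rewrite natrX prodr_const card_ord.
rewrite /poch rmorph_prod -prodf_div.
apply: eq_bigr => i _; rewrite rmorphD /= -[(i * s)%:Z%:~R]/((i * s)%:R : rat) natrM.
by field.
Qed.

Lemma poch_fracn (a s t : nat) : (0 < s)%N ->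
  poch (a%:R / s%:R) t = (\prod_(i < t) (a + i * s))%:R / (s ^ t)%:R.
Proof.
move=> s0; rewrite -[a%:R]/(a%:Z%:~R) poch_frac //.
by rewrite -(big_morph _ PoszM (erefl 1%Z)).
Qed.

Lemma posq_frac (x : rat) : 0 < x ->
  [/\ x = (qnum x)%:R / (qden x)%:R, (0 < qnum x)%N, (0 < qden x)%N &
      coprime (qnum x) (qden x)].
Proof.
move=> x0; have n0 : 0 < numq x by rewrite numq_gt0.
have d0 := denq_gt0 x.
rewrite /qnum /qden !absz_gt0 !gt_eqF // coprime_num_den; split=> //.
by rewrite !natr_absz !gtr0_norm // divq_num_den.
Qed.

Lemma qdenD_dvd (x y : rat) : 0 < x -> 0 < y -> (qden (x + y) %| qden y * qden x)%N.
Proof.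
move=> x0 y0; have [ex r0 s0 _] := posq_frac x0; have [ey r'0 s'0 _] := posq_frac y0.
have [exy _ v0 cop] := posq_frac (addr_gt0 x0 y0).
set r := qnum x in ex *; set s := qden x in ex s0 *.
set r' := qnum y in ey *; set s' := qden y in ey s'0 *.
set u := qnum (x + y) in exy cop *; set v := qden (x + y) in exy v0 cop *.
have uE : u%:R = (r%:R / s%:R + r'%:R / s'%:R) * v%:R :> rat.
  by rewrite -ex -ey exy divfK // pnatr_eq0 -lt0n.
have E : (u * (s' * s) = (r * s' + r' * s) * v)%N.
  apply/eqP; rewrite -(eqr_nat rat) !natrM natrD !natrM uE; apply/eqP; field.
  by rewrite !pnatr_eq0 -!lt0n s0 s'0.
have vu : coprime v u by rewrite coprime_sym.
by rewrite -(Gauss_dvdr _ vu) E dvdn_mull.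
Qed.

Lemma clears_den_poch_fact (A : int) (s t : nat) : (0 < s)%N ->
  clears_den (s ^ t * nu_prod s t) (poch (A%:~R / s%:R) t / t`!%:R).
Proof.
move=> s0; rewrite poch_frac // -mulrA -invfM -natrM.
apply: (clears_den_frac (b := (s ^ t * t`!)%N)).
rewrite !PoszM -mulrA dvdz_mul // dvdzE abszM /=.
apply/dvdn_partP => [|p]; first exact: fact_gt0.
rewrite mem_primes => /and3P[pp _ _]; rewrite p_part -nuE //.
have [ps|ps] := boolP (p %| s)%N.
  by rewrite dvdn_mulr // pfactor_dvdn ?nu_prod_gt0 ?nu_le_logn_nu_prod.
by rewrite dvdn_mull // -[(p ^ _)%N]/`|(p ^ nu p t)%:Z|%N -dvdzE pnu_dvdz_prod_arith.
Qed.

Lemma clears_den_poch_ratio (b w a s t X E W : nat) :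
  (0 < b)%N -> (0 < w)%N -> (0 < a)%N -> (0 < s)%N -> (0 < W)%N -> coprime a s ->
  (w ^ t %| E * s ^ t)%N -> (forall i, i < t -> a + i * s <= X)%N ->
  (forall p, prime p -> ~~ (p %| s) -> p %| w -> nu p t + trunc_log p X <= logn p W)%N ->
  (forall p, prime p -> ~~ (p %| s) -> ~~ (p %| w) -> trunc_log p X <= logn p W)%N ->
  clears_den (E * W) (poch (b%:R / w%:R) t / poch (a%:R / s%:R) t).
Proof.
move=> b0 w0 a0 s0 W0 a_s w_Es aX W_dvd W_ndvd; rewrite !poch_fracn //.
set Pb := (\prod_(i < t) (b + i * w))%N; set Pa := (\prod_(i < t) (a + i * s))%N.
have Pa0 : (0 < Pa)%N by apply: prodn_cond_gt0 => i _; rewrite addn_gt0 a0.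
have nz n : (0 < n)%N -> n%:R != 0 :> rat by rewrite pnatr_eq0 -lt0n.
rewrite (_ : Pb%:R / (w ^ t)%:R / (Pa%:R / (s ^ t)%:R) = (Pb * s ^ t)%:R / (w ^ t * Pa)%:R).
  2: by rewrite !natrM; field; rewrite !nz ?expn_gt0 ?w0 ?s0.
apply: clears_den_fracn.
rewrite [X in (_ %| X)%N](_ : _ = (E * s ^ t) * (W * Pb))%N; last by ring.
by apply: dvdn_mul w_Es _; apply: (@dvdn_prod_arith a s b w t X W).
Qed.

Lemma clears_den_poch_ratio_Q (b v a s s0 n X : nat) :
  (0 < b)%N -> (0 < v)%N -> (0 < a)%N -> (0 < s)%N -> coprime a s -> (v %| s0 * s)%N ->
  (forall i, i < n -> a + i * s <= X)%N ->
  clears_den (s0 ^ n * (nu_prod v n * \prod_(p < X.+1 | prime p && ~~ (p %| s)%N) p ^ Mp p X))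
    (poch (b%:R / v%:R) n / poch (a%:R / s%:R) n).
Proof.
move=> b0 v0 a0 s_gt0 a_s v_s0s aX; set P := fun q => prime q && ~~ (q %| s)%N.
set M := (\prod_(p < X.+1 | _) _)%N.
have P_gt0 q : P q -> (0 < q)%N by case/andP=> /prime_gt0.
have M_gt0 : (0 < M)%N by apply: (@prod_pow_gt0 X.+1 P (Mp^~ X)).
have M_ge p : prime p -> ~~ (p %| s)%N -> (trunc_log p X <= logn p M)%N.
  by move=> pp ps; apply: (@trunc_log_le_logn_prod_Mp p X P) => //; rewrite /P pp ps.
apply: (@clears_den_poch_ratio b v a s n X) => //.
- by rewrite muln_gt0 nu_prod_gt0 M_gt0.
- by rewrite -expnMn dvdn_exp2r.
- move=> p pp ps pv; rewrite lognM ?nu_prod_gt0 // leq_add ?M_ge //.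
  exact: nu_le_logn_nu_prod.
- by move=> p pp ps _; rewrite lognM ?nu_prod_gt0 // (leq_trans (M_ge _ pp ps)) ?leq_addl.
Qed.

Lemma clears_den_poch_ratio_P (a s b v dt S N t U V : nat) :
  (0 < a)%N -> (0 < s)%N -> (0 < b)%N -> (0 < v)%N -> coprime b v -> (s %| dt * v)%N ->
  (t <= N)%N -> (b <= U)%N -> (v <= V)%N -> (s %| S)%N -> (0 < S)%N ->
  clears_den (dt ^ N * nu_prod S N * \prod_(p < (U + V * N).+1 | prime p) p ^ Mp p (U + V * N))
    (poch (a%:R / s%:R) t / poch (b%:R / v%:R) t).
Proof.
move=> a0 s0 b0 v0 b_v s_dtv tN bU vV sS S0; set X := (U + V * N)%N.
set M := (\prod_(p < X.+1 | _) _)%N.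
have M_gt0 : (0 < M)%N by apply: (@prod_pow_gt0 X.+1 prime (Mp^~ X)) => q /prime_gt0.
have M_ge p : prime p -> (trunc_log p X <= logn p M)%N.
  by move=> pp; apply: (@trunc_log_le_logn_prod_Mp p X prime) => // q /prime_gt0.
rewrite -mulnA; apply: (@clears_den_poch_ratio a s b v t X) => //.
- by rewrite muln_gt0 nu_prod_gt0 M_gt0.
- by apply: dvdn_trans (dvdn_exp2r t s_dtv) _; rewrite expnMn dvdn_mul ?dvdn_exp2l.
- move=> i it; rewrite leq_add // mulnC leq_mul //; exact: leq_trans (ltnW it) tN.
- move=> p pp pv ps; rewrite lognM ?nu_prod_gt0 // leq_add ?M_ge //.
  apply: leq_trans (leq_nu pp tN) (nu_le_logn_nu_prod _ pp S0 _); exact: dvdn_trans ps sS.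
- by move=> p pp _ _; rewrite lognM ?nu_prod_gt0 // (leq_trans (M_ge _ pp)) ?leq_addl.
Qed.

End Denominators.

(** * The coefficients of [Q_i] and [P_ij] *)

Definition D1_factor (alpha : nat -> rat) (n : nat -> nat) (j : nat) : nat :=
  let X := r_ alpha j + (n 0 + 1) * s_ alpha j in
  nu_prod (v_ alpha j) (n j) * \prod_(p < X.+1 | prime p && ~~ (p %| s_ alpha j)) p ^ Mp p X.

Lemma D1E m alpha n : D1 m alpha n =
  s_ alpha 0 ^ (2 * Ntot m n - 1) * nu_prod (s_ alpha 0) (Ntot m n - 1)
  * \prod_(1 <= j < m.+1) D1_factor alpha n j.
Proof. by []. Qed.

Section CoefficientsOfQ.
Local Open Scope ring_scope.

Lemma clears_den_coefa_factor (alpha : nat -> rat) (n : nat -> nat) (i j l : nat) :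
  0 < alpha 0%N -> 0 < alpha j -> (n j <= n 0%N)%N ->
  clears_den (s_ alpha 0 ^ n j * D1_factor alpha n j)
    (poch (alpha j + alpha 0%N + (n 0%N)%:R - (n j)%:R + (i == j)%:R + l%:R + 1) (n j)
     / poch (alpha j + (n 0%N)%:R - (n j)%:R + (i == j)%:R + 1) (n j)).
Proof.
move=> a0_gt0 aj_gt0 nj_le.
have [ajE r_gt0 s_gt0 r_s] := posq_frac aj_gt0.
have [ujE u_gt0 v_gt0 _] := posq_frac (addr_gt0 aj_gt0 a0_gt0).
set c := (n 0%N - n j + (i == j) + 1)%N.
have -> : alpha j + alpha 0%N + (n 0%N)%:R - (n j)%:R + (i == j)%:R + l%:R + 1
    = (u_ alpha j + (c + l) * v_ alpha j)%N%:R / (v_ alpha j)%:R.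
  rewrite {1}ujE /c !(natrD, natrM) natrB //; field.
  by rewrite pnatr_eq0 -lt0n.
have -> : alpha j + (n 0%N)%:R - (n j)%:R + (i == j)%:R + 1
    = (r_ alpha j + c * s_ alpha j)%N%:R / (s_ alpha j)%:R.
  rewrite {1}ajE /c !(natrD, natrM) natrB //; field.
  by rewrite pnatr_eq0 -lt0n.
apply: clears_den_poch_ratio_Q => //.
- by rewrite addn_gt0 u_gt0.
- by rewrite addn_gt0 r_gt0.
- by rewrite /coprime gcdnC addnC gcdnMDl gcdnC.
- exact: qdenD_dvd.
- move=> i' i'_lt; rewrite -addnA leq_add2l -mulnDl leq_mul2r; apply/orP; right.
  rewrite /c; case: (i == j) => /=; lia.
Qed.

Lemma clears_den_coefa m alpha n i k :
  (forall j, (j <= m)%N -> 0 < alpha j) -> (forall j, (1 <= j <= m)%N -> (n j <= n 0%N)%N) ->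
  clears_den (D1 m alpha n) (coefa m alpha n i k).
Proof.
move=> alpha_gt0 n_le; rewrite /coefa; case: eqP => _.
  by rewrite /clears_den mulr1 rpred_nat.
set N := Ntot m n; set kk := (N - k).-1; set s0 := s_ alpha 0.
have a0_gt0 := alpha_gt0 0%N (leq0n _).
have [a0E r0_gt0 s0_gt0 _] := posq_frac a0_gt0.
apply: clears_den_sum => l; rewrite mem_index_iota => /andP[kk_l lN] _.
apply: (@clears_den_dvd (1 * (s0 ^ (l - kk) * nu_prod s0 (l - kk))
    * (s0 ^ (N - l - 1) * nu_prod s0 (N - l - 1))
    * \prod_(1 <= j < m.+1) (s0 ^ n j * D1_factor alpha n j))%N).
  rewrite D1E -/N -/s0 big_split /= -expn_sum -/N mul1n.
  rewrite (_ : (_ * _ * _ * _ = s0 ^ ((l - kk) + (N - l - 1) + N)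
      * (nu_prod s0 (l - kk) * nu_prod s0 (N - l - 1))
      * \prod_(1 <= j < m.+1) D1_factor alpha n j)%N); last by rewrite !expnD; ring.
  by rewrite !dvdn_mul ?dvdn_exp2l ?nu_prodM_dvd //; lia.
apply: clears_denM; [apply: clears_denM; [apply: clears_denM|]|].
- by apply: clears_den1; rewrite rpredX ?rpredN ?rpred1.
- rewrite (_ : alpha 0%N - 1 = (Posz (qnum (alpha 0%N)) - Posz s0)%:~R / s0%:R).
    exact: clears_den_poch_fact.
  by rewrite {1}a0E intrB; field; rewrite pnatr_eq0 -lt0n.
- rewrite (_ : alpha 0%N + l.+1%:R = (Posz (qnum (alpha 0%N) + l.+1 * s0))%:~R / s0%:R).
    exact: clears_den_poch_fact.
  rewrite {1}a0E -[(Posz _)%:~R]/((_ + _)%N%:R : rat) natrD natrM; field.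
  by rewrite pnatr_eq0 -lt0n.
- apply: clears_den_prod => j; rewrite mem_index_iota => /andP[j1 jm] _.
  apply: clears_den_coefa_factor => //; first exact: alpha_gt0.
  by apply: n_le; rewrite j1.
Qed.

End CoefficientsOfQ.

Lemma leq_bigmax_nat (F : nat -> nat) a b j : a <= j < b -> F j <= \max_(a <= i < b) F i.
Proof. by move=> jab; apply: leq_bigmax_seq; rewrite ?mem_index_iota. Qed.

Lemma dvdn_biglcm_nat (F : nat -> nat) a b j : a <= j < b -> F j %| \big[lcmn/1]_(a <= i < b) F i.
Proof. by move=> jab; rewrite (big_rem j) ?mem_index_iota //= dvdn_lcml. Qed.

Lemma biglcm_nat_gt0 (F : nat -> nat) a b : (forall i, a <= i < b -> 0 < F i) ->
  0 < \big[lcmn/1]_(a <= i < b) F i.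
Proof.
move=> F0; rewrite big_seq; apply: (big_ind (fun x => 0 < x)) => // [x y|i].
  by rewrite lcmn_gt0 => -> ->.
by rewrite mem_index_iota => /F0.
Qed.

Lemma qden_gt0 (x : rat) : 0 < qden x.
Proof. by rewrite /qden absz_gt0 denq_eq0. Qed.

Lemma s_dvd_dtil_v m alpha j : (0 < alpha 0%N)%R -> (0 < alpha j)%R -> 1 <= j <= m ->
  s_ alpha j %| dtil m alpha * v_ alpha j.
Proof.
move=> a0_gt0 aj_gt0 jm.
have djE : d_ alpha j * v_ alpha j = s_ alpha 0 * s_ alpha j by rewrite divnK // qdenD_dvd.
rewrite -(@dvdn_pmul2l (s_ alpha 0)) ?qden_gt0 // -djE mulnA dvdn_mul //.
apply: dvdn_trans (@dvdn_biglcm_nat (d_ alpha) 1 m.+1 j jm) _; rewrite -/(dlcm m alpha).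
have dlcmE : dlcm m alpha = dtil m alpha * gcdn (dlcm m alpha) (s_ alpha 0).
  by rewrite divnK ?dvdn_gcdl.
by rewrite {1}dlcmE mulnC dvdn_mul ?dvdn_gcdr.
Qed.

Lemma clears_den_coefc_ratio m alpha n j t :
  (forall j, j <= m -> (0 < alpha j)%R) -> 1 <= j <= m -> t <= Ntil m n ->
  clears_den (D2 m alpha n) (poch (alpha j) t / poch (alpha j + alpha 0%N) t)%R.
Proof.
move=> alpha_gt0 jm tN; have /andP[_ j_le] := jm.
have a0_gt0 := alpha_gt0 0 (leq0n _); have aj_gt0 := alpha_gt0 j j_le.
have [ujE u_gt0 v_gt0 u_v] := posq_frac (addr_gt0 aj_gt0 a0_gt0).
have [ajE r_gt0 s_gt0 _] := posq_frac aj_gt0.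
rewrite ujE {1}ajE; apply: clears_den_poch_ratio_P => //.
- exact: s_dvd_dtil_v.
- exact: (leq_bigmax_nat (u_ alpha)).
- exact: (leq_bigmax_nat (v_ alpha)).
- exact: (dvdn_biglcm_nat (s_ alpha)).
- by apply: biglcm_nat_gt0 => i _; apply: qden_gt0.
Qed.

Lemma clears_den_coefc m alpha n i j mu :
  (forall j, j <= m -> (0 < alpha j)%R) -> (forall j, 1 <= j <= m -> 0 < n j) ->
  (forall j, 1 <= j <= m -> n j <= n 0) -> 1 <= j <= m ->
  mu <= Ntil m n - n j + (i == j) ->
  clears_den (DN m alpha n) (coefc m alpha n i j mu).
Proof.
move=> alpha_gt0 n_gt0 n_le jm mu_le.
apply: clears_den_sum => k _ _; apply: clears_denM; first exact: clears_den_coefa.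
apply: clears_den_coefc_ratio => //.
have := n_gt0 j jm; have := n_le j jm; rewrite /Ntil in mu_le *.
by case: (i == j) mu_le => /=; lia.
Qed.

Unset Implicit Arguments.
Local Open Scope ring_scope.

Theorem lemma4 (m : nat) (hm : (1 <= m)%N) (alpha : nat -> rat)
  (halpha : forall j, (j <= m)%N -> 0 < alpha j)
  (hdiff : forall i j, (1 <= i)%N -> (i < j)%N -> (j <= m)%N ->
             alpha i - alpha j \isn't a Num.int)
  (n : nat -> nat)
  (hn : forall j, (1 <= j <= m)%N -> (0 < n j)%N)
  (hn0 : forall j, (1 <= j <= m)%N -> (n j <= n 0)%N) :
  forall i, (i <= m)%N ->
    ((DN m alpha n)%:R *: Qpoly m alpha n i \is a polyOver Num.int)
    /\ (forall j, (1 <= j <= m)%N ->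
          (DN m alpha n)%:R *: Ppoly m alpha n i j \is a polyOver Num.int).
Proof.
move=> i _; split=> [|j jm]; apply/polyOverP => k; rewrite coefZ coef_poly.
  case: ifP => _; last by rewrite mulr0.
  by apply: clears_den_dvd (clears_den_coefa i k halpha hn0); rewrite dvdn_mulr.
case: ifP => [k_lt|_]; last by rewrite mulr0.
by apply: clears_den_coefc; rewrite // -ltnS.
Qed.
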